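(* $z_2(4,4)=10$.
   Context: Double Zarankiewicz number: consider configurations $G=([m],[n],E_1\cup E_2)$ where $[m]=\{1,\dots,m\}$, $E_1\subseteq[m]\times[n]$ is a set of 1-edges (cells) and $E_2$ is a set of 2-edges $(i,j;k,l)$ with $i,k\in[m]$, $j,l\in[n]$, $i\ne k$, $j\ne l$; the cells $(i,j)$ and $(k,l)$ are the two halves of this 2-edge. Simplicity condition: the halves of all 2-edges are pairwise distinct cells and none of them belongs to $E_1$. A cell is occupied if it lies in $E_1$ or is a half of some 2-edge. $G$ contains a generalized $C_4$-cycle if (1) there are four 1-edges $(i,j),(i,l),(k,j),(k,l)\in E_1$ with $i\ne k$, $j\ne l$; or (2) there is a 2-edge $(i,j;k,l)\in E_2$ whose two opposite cells $(i,l)$ and $(k,j)$ are both occupied; or (3) there are a 2-edge $(i,j;p,q)\in E_2$ and a cell $(k,l)$ such that the five cells $(k,l),(k,j),(k,q),(i,l),(p,l)$ are pairwise distinct and all occupied. $z_2(m,n)$ is the maximum of $|E_1|+|E_2|$ over all such $G$ satisfying the simplicity condition and containing no generalized $C_4$-cycle. *)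

From mathcomp Require Import all_boot.
Set Implicit Arguments. Unset Strict Implicit. Unset Printing Implicit Defensive.

(* Rows are 'I_m (= {1..m} shifted to {0..m-1}), columns 'I_n. *)
Definition cell (m n : nat) := ('I_m * 'I_n)%type.

(* A 2-edge (i,j;k,l) is represented as the pair of its halves ((i,j),(k,l)). *)
Definition tedge (m n : nat) := (cell m n * cell m n)%type.

Definition config (m n : nat) := ({set cell m n} * {set tedge m n})%type.

Section Defs.
Variables m n : nat.
Implicit Types (G : config m n) (c : cell m n) (e : tedge m n).

Definition E1 G := G.1.
Definition E2 G := G.2.

Definition tedges_ok G : bool :=
  [forall e in E2 G, (e.1.1 != e.2.1) && (e.1.2 != e.2.2)].

Definition simple_config G : bool :=
  [forall e in E2 G, forall f in E2 G,
     [&& (e.1 == f.1) ==> (e == f),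
         (e.2 == f.2) ==> (e == f) &
         e.1 != f.2]] &&
  [forall e in E2 G, (e.1 \notin E1 G) && (e.2 \notin E1 G)].

Definition occupied G c : bool :=
  (c \in E1 G) || [exists e in E2 G, (c == e.1) || (c == e.2)].

Definition cycle1 G : bool :=
  [exists i : 'I_m, exists k : 'I_m, exists j : 'I_n, exists l : 'I_n,
    [&& i != k, j != l,
        (i, j) \in E1 G, (i, l) \in E1 G, (k, j) \in E1 G & (k, l) \in E1 G]].

Definition cycle2 G : bool :=
  [exists e in E2 G,
    occupied G (e.1.1, e.2.2) && occupied G (e.2.1, e.1.2)].

Definition cycle3 G : bool :=
  [exists e in E2 G, exists c : cell m n,
    let: ((i, j), (p, q)) := e in
    let: (k, l) := c in
    let s := [:: (k, l); (k, j); (k, q); (i, l); (p, l)] in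
    uniq s && all (occupied G) s].

Definition has_gen_C4 G : bool := [|| cycle1 G, cycle2 G | cycle3 G].

Definition admissible G : bool :=
  [&& tedges_ok G, simple_config G & ~~ has_gen_C4 G].

Definition weight G : nat := #|E1 G| + #|E2 G|.

End Defs.

Definition z2 (m n : nat) : nat :=
  \max_(G : config m n | admissible G) weight G.

From mathcomp Require Import all_boot zify.
Set Implicit Arguments. Unset Strict Implicit. Unset Printing Implicit Defensive.

(* Let O be the set of occupied cells of an admissible configuration G on the
   4 x 4 grid; simplicity gives |O| = |E1| + 2|E2|.  E1 contains no rectangle,
   so |E1| <= 9.  Call a 2-edge good in O when its halves are occupied, its two
   opposite cells are not both occupied and it is the 2-edge of no type (3)
   cycle: every 2-edge of G is good in O.  An exhaustive search over the 2^16
   patterns shows that a pattern carrying a good 2-edge has at most 13 cells,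
   and that removing the four halves of two disjoint good 2-edges from a
   13-cell pattern always leaves a rectangle.  Hence |E1| + |E2| <= 10, since
   |E1| = 9, |E2| = 2 would force |O| = 13 and E1 = O minus the halves.  A
   configuration with nine 1-edges and one 2-edge attains 10.  The search runs
   on boolean grids indexed by nat, mirroring the predicates on cells. *)

Section Patterns.
Variables m n : nat.
Implicit Types (A B : pred (cell m n)) (G : config m n) (c : cell m n) (e f : tedge m n).

Definition has_rect A : bool :=
  [exists i : 'I_m, exists k : 'I_m, exists j : 'I_n, exists l : 'I_n,
    [&& i != k, j != l, A (i, j), A (i, l), A (k, j) & A (k, l)]].

Definition good_tedge A e : bool :=
  let: ((i, j), (p, q)) := e in
  [&& i != p, j != q, A (i, j), A (p, q), ~~ (A (i, q) && A (p, j)) &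
      ~~ [exists c : cell m n, let: (k, l) := c in
            let s := [:: (k, l); (k, j); (k, q); (i, l); (p, l)] in
            uniq s && all A s]].

Lemma eq_has_rect A B : A =1 B -> has_rect A = has_rect B.
Proof.
move=> AB; do 4![apply: eq_existsb => ?]; by rewrite !AB.
Qed.

Lemma simple_configP G :
  reflect [/\ {in E2 G &, forall e f, e.1 = f.1 -> e = f},
              {in E2 G &, forall e f, e.2 = f.2 -> e = f},
              {in E2 G &, forall e f, e.1 != f.2} &
              {in E2 G, forall e, (e.1 \notin E1 G) && (e.2 \notin E1 G)}]
          (simple_config G).
Proof.
apply: (iffP andP) => [[/forall_inP simE2 /forall_inP simE1] |
                        [inj1 inj2 neq12 simE1]].
  have simE2P e f : e \in E2 G -> f \in E2 G ->
      [/\ e.1 = f.1 -> e = f, e.2 = f.2 -> e = f & e.1 != f.2].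
    move=> eE fE; have /forall_inP/(_ f fE) := simE2 e eE.
    by case/and3P=> /implyP e1f1 /implyP e2f2 ?; split=> // /eqP ?; apply/eqP; auto.
  by split=> // e f eE fE; case: (simE2P e f eE fE).
split; apply/forall_inP => // e eE; apply/forall_inP => f fE.
by rewrite neq12 // !andbT; apply/andP; split; apply/implyP => /eqP ?;
  apply/eqP; [apply: inj1 | apply: inj2].
Qed.

Lemma occupied_halves G e : e \in E2 G -> occupied G e.1 && occupied G e.2.
Proof.
move=> eE; apply/andP; split; apply/orP; right.
  by apply/exists_inP; exists e; rewrite ?eqxx.
by apply/exists_inP; exists e; rewrite ?eqxx ?orbT.
Qed.

Lemma admissibleP G :
  reflect [/\ simple_config G, ~~ has_rect (mem (E1 G)) &
              {in E2 G, forall e, good_tedge (occupied G) e}]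
          (admissible G).
Proof.
rewrite /admissible /has_gen_C4 /cycle2 /cycle3 !negb_or !negb_exists_in.
apply: (iffP and3P) => [[/forall_inP ok simG /and3P[rect /forall_inP nc2 /forall_inP nc3]] |
                         [simG rect good]].
  split=> // -[[i j] [p q]] eE; have /andP[occ1 occ2] := occupied_halves eE.
  by have /andP[/= -> ->] := ok _ eE; rewrite /= occ1 occ2 (nc2 _ eE) (nc3 _ eE).
split=> //; last (apply/and3P; split=> //); apply/forall_inP => -[[i j] [p q]] /good /=.
- by case/and5P=> -> ->.
- by case/and5P=> _ _ _ _ /andP[].
- by case/and5P=> _ _ _ _ /andP[].
Qed.

Lemma card_occupied G : simple_config G -> #|occupied G| = #|E1 G| + 2 * #|E2 G|.
Proof.
case/simple_configP=> inj1 inj2 neq12 simE1.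
set H1 := [set e.1 | e in E2 G]; set H2 := [set e.2 | e in E2 G].
have -> : #|occupied G| = #|E1 G :|: (H1 :|: H2)|.
  apply: eq_card => c; rewrite !inE /occupied; congr (_ || _).
  apply/exists_inP/orP => [[e eE /orP[] /eqP->] | [] /imsetP[e eE ->]].
  - by left; apply/imsetP; exists e.
  - by right; apply/imsetP; exists e.
  - by exists e; rewrite ?eqxx.
  - by exists e; rewrite ?eqxx ?orbT.
have disj12 : [disjoint H1 & H2].
  apply/pred0P => c /=; apply/negP => /andP[/imsetP[e eE ->] /imsetP[f fE]].
  exact/eqP/neq12.
have disjE1 : [disjoint E1 G & H1 :|: H2].
  apply/pred0P => c /=; apply/negP => /andP[cE1].
  by rewrite !inE => /orP[] /imsetP[e eE ceq]; have /andP[] := simE1 e eE; rewrite -ceq cE1.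
rewrite !cardsU !(disjoint_setI0 _) // !cards0 !subn0 !card_in_imset //.
by rewrite addnn -mul2n.
Qed.

Lemma uniq_halves G e f : simple_config G -> e \in E2 G -> f \in E2 G -> e != f ->
  uniq [:: e.1; e.2; f.1; f.2].
Proof.
case/simple_configP=> inj1 inj2 neq12 _ eE fE ef.
rewrite /= !inE !negb_or [e.2 == f.1]eq_sym !neq12 //= !andbT.
by apply/andP; split; apply: (contraNneq _ ef);
  [move/(inj1 _ _ eE fE) | move/(inj2 _ _ eE fE)] => ->.
Qed.

Lemma mem_E1_two_tedges G e f : simple_config G -> E2 G = [set e; f] ->
  forall c, (c \in E1 G) = occupied G c && (c \notin [:: e.1; e.2; f.1; f.2]).
Proof.
case/simple_configP=> _ _ _ simE1 E2ef c.
have eE : e \in E2 G by rewrite E2ef !inE eqxx.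
have fE : f \in E2 G by rewrite E2ef !inE eqxx orbT.
rewrite /occupied; have [cE1 | cE1] /= := boolP (c \in E1 G).
  apply/esym/negP; rewrite !inE => /or4P[] /eqP ceq;
  by move: (simE1 e eE) (simE1 f fE); rewrite -ceq cE1 ?andbF.
apply/esym/negbTE/negP => /andP[/exists_inP[x]].
by rewrite E2ef !inE => /orP[] /eqP-> /orP[] /eqP->; rewrite eqxx ?orbT.
Qed.

Lemma occupied_set1 (E : {set cell m n}) e c :
  occupied (E, [set e]) c = [|| c \in E, c == e.1 | c == e.2].
Proof.
rewrite /occupied; congr (_ || _).
by apply/exists_inP/idP => [[x /set1P-> //] | ?]; exists e; rewrite ?set11.
Qed.

End Patterns.

Definition grid := seq (seq bool).
Definition grid_at (g : grid) (i j : nat) : bool := nth false (nth [::] g i) j.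
Definition grid_card (g : grid) : nat := sumn (map (count id) g).

Definition ncell m n (c : cell m n) : nat * nat := (val c.1, val c.2).

Lemma ncell_inj m n : injective (@ncell m n).
Proof. by move=> [i j] [k l] [/val_inj-> /val_inj->]. Qed.

Section GridOf.
Variables m n : nat.
Implicit Types A : pred (cell m n).

Definition grid_of A : grid :=
  [seq [seq A (i, j) | j <- enum 'I_n] | i <- enum 'I_m].

Lemma grid_of_at A (i : 'I_m) (j : 'I_n) : grid_at (grid_of A) i j = A (i, j).
Proof.
rewrite /grid_at (nth_map i) ?size_enum_ord // (nth_map j) ?size_enum_ord //.
by rewrite !nth_ord_enum.
Qed.

Lemma shape_grid_of A : shape (grid_of A) = nseq m n.
Proof.
have shapeE : shape (grid_of A) = nseq (size (shape (grid_of A))) n.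
  apply/all_pred1P/allP => _ /mapP[_ /mapP[i _ ->] ->].
  by rewrite /= size_map size_enum_ord.
by rewrite shapeE /shape size_map size_map size_enum_ord.
Qed.

Lemma grid_card_of A : grid_card (grid_of A) = #|A|.
Proof.
rewrite cardE /enum_mem size_filter unlock /= /prod_enum /grid_card count_flatten.
congr sumn; rewrite -!map_comp; apply: (@eq_map 'I_m) => i /=.
by rewrite !count_map.
Qed.

Definition grid_nat (B : nat -> nat -> bool) : grid :=
  [seq [seq B i j | j <- iota 0 n] | i <- iota 0 m].

Lemma grid_of_nat (B : nat -> nat -> bool) : grid_of (fun c => B c.1 c.2) = grid_nat B.
Proof.
rewrite /grid_of /grid_nat -!val_enum_ord -map_comp; apply: (@eq_map 'I_m) => i /=.
by rewrite -map_comp.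
Qed.

End GridOf.

Fixpoint all_tuples (T : Type) (xs : seq T) (k : nat) (P : pred (seq T)) : bool :=
  if k is k'.+1 then all (fun x => all_tuples xs k' (fun s => P (x :: s))) xs
  else P [::].

Lemma all_tuplesP (T : eqType) (xs : seq T) k P :
  all_tuples xs k P -> forall s, size s = k -> all (mem xs) s -> P s.
Proof.
elim: k P => [|k IH] P /= Pxs [|x s] //= [sk] /andP[xxs sxs].
exact: IH (allP Pxs x xxs) s sk sxs.
Qed.

Definition all_grids m n (P : pred grid) : bool :=
  all_tuples [:: true; false] (m * n) (fun s => P (reshape (nseq m n) s)).

Lemma all_gridsP m n P : all_grids m n P -> forall A : pred (cell m n), P (grid_of A).
Proof.
move=> /all_tuplesP Pgrids A; rewrite -(flattenK (grid_of A)) shape_grid_of.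
apply: Pgrids; first by rewrite size_flatten shape_grid_of sumn_nseq mulnC.
by apply/allP => -[].
Qed.

Lemma exists_ord_iota d (P : pred 'I_d) (Q : pred nat) :
  (forall i : 'I_d, P i = Q i) -> [exists i, P i] = has Q (iota 0 d).
Proof.
move=> PQ; rewrite -val_enum_ord has_map.
by apply/existsP/hasP => [[i Pi] | [i _ Qi]]; exists i; rewrite ?mem_enum //= ?PQ // -PQ.
Qed.

Lemma exists_pair (T1 T2 : finType) (P : pred (T1 * T2)) :
  [exists c, P c] = [exists x1, exists x2, P (x1, x2)].
Proof.
apply/existsP/existsP => [[[x1 x2] Px] | [x1 /existsP[x2 Px]]]; last by exists (x1, x2).
by exists x1; apply/existsP; exists x2.
Qed.

Section NatPatterns.
Variables m n : nat.
Implicit Types (B : nat -> nat -> bool) (i j k l p q : nat).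

Definition has_rect_nat B : bool :=
  has (fun i => has (fun k => has (fun j => has (fun l =>
    [&& i != k, j != l, B i j, B i l, B k j & B k l])
  (iota 0 n)) (iota 0 n)) (iota 0 m)) (iota 0 m).

Definition good_tedge_nat B (e : (nat * nat) * (nat * nat)) : bool :=
  let: ((i, j), (p, q)) := e in
  [&& i != p, j != q, B i j, B p q, ~~ (B i q && B p j) &
      ~~ has (fun k => has (fun l =>
            let s := [:: (k, l); (k, j); (k, q); (i, l); (p, l)] in
            uniq s && all (fun c => B c.1 c.2) s)
          (iota 0 n)) (iota 0 m)].

Definition tedges_nat : seq ((nat * nat) * (nat * nat)) :=
  let cells := [seq (i, j) | i <- iota 0 m, j <- iota 0 n] in
  [seq (a, b) | a <- cells, b <- cells].

Variables (A : pred (cell m n)) (B : nat -> nat -> bool).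
Hypothesis BA : forall (i : 'I_m) (j : 'I_n), B i j = A (i, j).

Lemma has_rectE : has_rect A = has_rect_nat B.
Proof.
rewrite /has_rect /has_rect_nat.
do 2![apply: (exists_ord_iota (d := m)) => ?].
do 2![apply: (exists_ord_iota (d := n)) => ?].
by rewrite -!BA.
Qed.

Lemma good_tedgeE e : good_tedge A e = good_tedge_nat B (ncell e.1, ncell e.2).
Proof.
case: e => [[i j] [p q]]; rewrite /good_tedge /good_tedge_nat -!BA exists_pair.
congr [&& _, _, _, _, _ & ~~ _].
apply: (exists_ord_iota (d := m)) => k; apply: (exists_ord_iota (d := n)) => l.
rewrite -(map_inj_uniq (@ncell_inj m n)); congr (_ && _).
by rewrite /= -!BA.
Qed.

Lemma mem_tedges_nat (e : tedge m n) : (ncell e.1, ncell e.2) \in tedges_nat.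
Proof.
have cellsP (c : cell m n) : ncell c \in [seq (i, j) | i <- iota 0 m, j <- iota 0 n].
  by apply/allpairsP; exists (ncell c); rewrite !mem_iota /= !ltn_ord.
by apply/allpairsP; exists (ncell e.1, ncell e.2); rewrite !cellsP.
Qed.

End NatPatterns.

(* The checks use [if] rather than [||] because the VM evaluates both
   arguments of [||]. *)
Lemma card_rect_free (A : pred (cell 4 4)) : ~~ has_rect A -> #|A| <= 9.
Proof.
have check : all_grids 4 4 (fun g =>
    if grid_card g <= 9 then true else has_rect_nat 4 4 (grid_at g)).
  by vm_compute.
move=> rfree; have := all_gridsP check A.
rewrite grid_card_of -(has_rectE (grid_of_at A)) (negbTE rfree).
by case: leqP.
Qed.

Lemma card_good_tedge (A : pred (cell 4 4)) e : good_tedge A e -> #|A| <= 13.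
Proof.
have check : all_grids 4 4 (fun g => if grid_card g <= 13 then true
    else ~~ has (good_tedge_nat 4 4 (grid_at g)) (tedges_nat 4 4)).
  by vm_compute.
move=> goodAe; have := all_gridsP check A.
rewrite grid_card_of; case: leqP => [// | _ /hasPn/(_ _ (mem_tedges_nat e))].
by rewrite -(good_tedgeE (grid_of_at A)) goodAe.
Qed.

Lemma good_tedges_rect (A : pred (cell 4 4)) e f :
  #|A| = 13 -> good_tedge A e -> good_tedge A f -> uniq [:: e.1; e.2; f.1; f.2] ->
  has_rect [pred c | A c & c \notin [:: e.1; e.2; f.1; f.2]].
Proof.
(* [grid_nat] materialises each reduced pattern once, so that the rectangle
   search only performs list lookups. *)
have check : all_grids 4 4 (fun g => if grid_card g == 13 then
    let goods := [seq x <- tedges_nat 4 4 | good_tedge_nat 4 4 (grid_at g) x] in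
    all (fun x => all (fun y => let L := [:: x.1; x.2; y.1; y.2] in
      uniq L ==> has_rect_nat 4 4
        (grid_at (grid_nat 4 4 (fun i j => grid_at g i j && ((i, j) \notin L)))))
      goods) goods
  else true).
  by vm_compute.
move=> cardA goode goodf uniqL; have := all_gridsP check A.
rewrite grid_card_of cardA eqxx; set goods := filter _ _.
have mem_goods x : good_tedge A x -> (ncell x.1, ncell x.2) \in goods.
  move=> goodx; rewrite mem_filter mem_tedges_nat andbT.
  by rewrite -(good_tedgeE (grid_of_at A)).
rewrite -(map_inj_uniq (@ncell_inj 4 4)) in uniqL.
move=> /allP/(_ _ (mem_goods e goode))/allP/(_ _ (mem_goods f goodf)).
move=> /implyP/(_ uniqL).
rewrite -(has_rectE (A := [pred c | A c & c \notin [:: e.1; e.2; f.1; f.2]])) => [// | i j].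
by rewrite -grid_of_nat grid_of_at /= grid_of_at.
Qed.

Lemma weight_admissible_le10 (G : config 4 4) : admissible G -> weight G <= 10.
Proof.
case/admissibleP => simG rect_free good.
have E1_le9 : #|E1 G| <= 9 := card_rect_free rect_free.
rewrite /weight; have [-> | [e eE]] := set_0Vmem (E2 G); first by rewrite cards0; lia.
have := card_good_tedge (good e eE); rewrite card_occupied // => occ_le13.
suff : ~~ ((#|E1 G| == 9) && (#|E2 G| == 2)) by lia.
apply/negP => /andP[/eqP E1_9 /cards2P[e1 [f1 [e1f1 E2G]]]].
have e1E : e1 \in E2 G by rewrite E2G !inE eqxx.
have f1E : f1 \in E2 G by rewrite E2G !inE eqxx orbT.
have occ13 : #|occupied G| = 13 by rewrite card_occupied // E1_9 E2G cards2 e1f1.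
have := good_tedges_rect occ13 (good e1 e1E) (good f1 f1E) (uniq_halves simG e1E f1E e1f1).
by rewrite -(eq_has_rect (mem_E1_two_tedges simG E2G)) (negbTE rect_free).
Qed.

Definition E1_extremal : seq (nat * nat) :=
  [:: (0, 0); (0, 1); (0, 2); (1, 0); (1, 3); (2, 1); (2, 3); (3, 2); (3, 3)].

Definition tedge_extremal : tedge 4 4 :=
  ((Ordinal (isT : 1 < 4), Ordinal (isT : 1 < 4)),
   (Ordinal (isT : 2 < 4), Ordinal (isT : 2 < 4))).

Definition G_extremal : config 4 4 :=
  ([set c | ncell c \in E1_extremal], [set tedge_extremal]).

Lemma admissible_extremal : admissible G_extremal.
Proof.
apply/admissibleP; split.
- apply/simple_configP; split=> [e f | e f | e f | e]; rewrite !inE => /eqP->;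
    try move=> /eqP->; by [].
- rewrite (has_rectE (B := fun i j => (i, j) \in E1_extremal)) => [// | i j].
  by rewrite -[RHS]/((i, j) \in [set c | ncell c \in E1_extremal]) in_set.
- move=> e; rewrite inE => /eqP->.
  pose B i j := [|| (i, j) \in E1_extremal, (i, j) == (1, 1) | (i, j) == (2, 2)].
  rewrite (good_tedgeE (B := B)) => [// | i j].
  by rewrite /G_extremal occupied_set1 in_set.
Qed.

Lemma weight_extremal : weight G_extremal = 10.
Proof.
rewrite /weight cards1 cardsE -grid_card_of.
by rewrite (@grid_of_nat 4 4 (fun i j => (i, j) \in E1_extremal)).
Qed.

Theorem theorem3p3 : z2 4 4 = 10.
Proof.
apply/eqP; rewrite eqn_leq; apply/andP; split.
  by apply/bigmax_leqP => G; apply: weight_admissible_le10.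
by rewrite -{1}weight_extremal; apply: leq_bigmax_cond; apply: admissible_extremal.
Qed.
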